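(* For $s\geq0$ let $(G_s,\varphi)$ be as in the context, with induced metric having scalar curvature $\mathrm{scal}_s$ and Ricci operator $\mathrm{Ric}_s$, and let $F(s)=\mathrm{scal}_s^2/|\mathrm{Ric}_s|^2$. Then $F(s)=\dfrac{(75+64s^2)^2}{1725+4224s^2+4096s^4}$, and: (a) on $[0,\infty)$, $F$ attains its maximum at $s=0$, with $F(0)=\tfrac{75}{23}>3$; (b) at $s=\tfrac{\sqrt{15}}8$ (the value for which $(G_s,\varphi)$ is a steady Laplacian soliton), $F(s)=\tfrac{135}{49}$; (c) at $s=\tfrac58$ (the value for which $(G_s,\langle\cdot,\cdot\rangle)$ is an expanding Ricci soliton), $F(s)=\tfrac52$.
   Context: For $s\in\mathbb R$, $\mathfrak g_s$ is the real Lie algebra with basis $\{e_1,\dots,e_7\}$ whose only nonzero brackets of basis elements (up to antisymmetry) are $[e_1,e_3]=-e_6$, $[e_1,e_4]=-e_5$, $[e_2,e_3]=-e_5$, $[e_7,e_i]=(A_s)_{ii}e_i$ ($i=1,\dots,6$), with $A_s=\mathrm{Diag}(\tfrac38+s,-\tfrac18+s,\tfrac38-s,-\tfrac18-s,\tfrac14,\tfrac34)$; $G_s$ is the simply connected Lie group with Lie algebra $\mathfrak g_s$, with left-invariant $G_2$-structure $\varphi=e^{127}+e^{347}+e^{567}+e^{135}-e^{146}-e^{236}-e^{245}$ ($\{e^i\}$ dual basis), whose induced left-invariant metric $\langle\cdot,\cdot\rangle$ makes $\{e_i\}$ orthonormal. $|\mathrm{Ric}_s|^2=\mathrm{tr}(\mathrm{Ric}_s^2)$.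 *)

From mathcomp Require Import all_boot all_order all_algebra.
Set Implicit Arguments. Unset Strict Implicit. Unset Printing Implicit Defensive.
Import Order.TTheory GRing.Theory Num.Theory.
Local Open Scope ring_scope.

(* Metric Lie algebra (g, <.,.>) given by structure constants w.r.t. an
   orthonormal basis e_0..e_{n-1}:  [e_i, e_j] = \sum_k br i j k e_k.
   All objects are those of the left-invariant metric on the simply
   connected Lie group with this Lie algebra. *)
Section MetricLieAlgebra.
Variables (R : fieldType) (n : nat) (br : 'I_n -> 'I_n -> 'I_n -> R).

(* Koszul formula for left-invariant fields:
   <nabla_{e_i} e_j, e_k> = 1/2 (<[e_i,e_j],e_k> - <[e_j,e_k],e_i> + <[e_k,e_i],e_j>) *)
Definition lc_conn (i j k : 'I_n) : R := (br i j k - br j k i + br k i j) / 2%:R.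

(* <R(e_i,e_j) e_k, e_m>, with R(X,Y) = nabla_X nabla_Y - nabla_Y nabla_X - nabla_[X,Y] *)
Definition curv (i j k m : 'I_n) : R :=
  \sum_(l < n) lc_conn j k l * lc_conn i l m
  - \sum_(l < n) lc_conn i k l * lc_conn j l m
  - \sum_(l < n) br i j l * lc_conn l k m.

(* Ricci tensor Ric(Y,Z) = tr (X |-> R(X,Y)Z); in the orthonormal basis its
   matrix is also the matrix of the Ricci operator. *)
Definition ricci_mx : 'M[R]_n := \matrix_(j, k) \sum_(i < n) curv i j k i.

Definition scal_curv : R := \tr ricci_mx.
Definition ricci_norm2 : R := \tr (ricci_mx *m ricci_mx).
End MetricLieAlgebra.

(* The family g_s (0-indexed basis: e_1..e_7 of the paper are 0..6). *)
Definition A_diag (R : fieldType) (s : R) (i : nat) : R :=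
  match i with
  | 0 => 3%:R / 8%:R + s
  | 1 => - (1 / 8%:R) + s
  | 2 => 3%:R / 8%:R - s
  | 3 => - (1 / 8%:R) - s
  | 4 => 1 / 4%:R
  | 5 => 3%:R / 4%:R
  | _ => 0
  end.

Definition br_nat (R : fieldType) (s : R) (i j k : nat) : R :=
  match i, j, k with
  | 0, 2, 5 => -1 | 2, 0, 5 => 1
  | 0, 3, 4 => -1 | 3, 0, 4 => 1
  | 1, 2, 4 => -1 | 2, 1, 4 => 1
  | 6, i', k' => if (i' == k') && (i' < 6)%N then A_diag s i' else 0
  | i', 6, k' => if (i' == k') && (i' < 6)%N then - A_diag s i' else 0
  | _, _, _ => 0
  end.

Definition g_br (R : fieldType) (s : R) (i j k : 'I_7) : R := br_nat s i j k.

Definition scal_s (R : fieldType) (s : R) : R := scal_curv (g_br s).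
Definition ric_norm2_s (R : fieldType) (s : R) : R := ricci_norm2 (g_br s).

Definition F_s (R : fieldType) (s : R) : R := scal_s s ^+ 2 / ric_norm2_s s.

From mathcomp Require Import all_boot all_order all_algebra ring lra.
Import Order.TTheory GRing.Theory Num.Theory.
Local Open Scope ring_scope.

(* The Ricci operator of g_s is diagonal in the orthonormal basis (e_i), with
   entries affine in s except for the last one, -15/16 - 4 s^2.  Hence scal_s
   and |Ric_s|^2 are even polynomials in s, F is a rational function of s^2,
   and its maximum at s = 0 comes down to a polynomial inequality in s^2. *)

Section RicciOfGs.
Variables (R : numFieldType) (s : R).

Definition sum7 (F : nat -> R) : R :=
  F 0%N + F 1%N + F 2%N + F 3%N + F 4%N + F 5%N + F 6%N.

Lemma big_ord7 (F : nat -> R) : \sum_(i < 7) F i = sum7 F.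
Proof. by rewrite !big_ord_recl big_ord0 /sum7 /= !addrA addr0. Qed.

(* Copies of [lc_conn] and [curv] indexed by [nat], so that the index cases
   reduce by computation once the sums are unfolded. *)
Definition lc_conn_gs (i j k : nat) : R :=
  (br_nat s i j k - br_nat s j k i + br_nat s k i j) / 2%:R.

Definition curv_gs (i j k m : nat) : R :=
  sum7 (fun l => lc_conn_gs j k l * lc_conn_gs i l m)
  - sum7 (fun l => lc_conn_gs i k l * lc_conn_gs j l m)
  - sum7 (fun l => br_nat s i j l * lc_conn_gs l k m).

Definition ricci_gs (j k : nat) : R := sum7 (fun i => curv_gs i j k i).

Lemma ricci_mx_gsE (j k : 'I_7) : ricci_mx (g_br s) j k = ricci_gs j k.
Proof.
rewrite mxE /ricci_gs -big_ord7; apply: eq_bigr => i _.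
by rewrite /curv /curv_gs -!big_ord7.
Qed.

Definition ricci_eigen (i : nat) : R :=
  match i with
  | 0 => - (25%:R / 16%:R) - 3%:R / 2%:R * s
  | 1 => - (5%:R / 16%:R) - 3%:R / 2%:R * s
  | 2 => - (25%:R / 16%:R) + 3%:R / 2%:R * s
  | 3 => - (5%:R / 16%:R) + 3%:R / 2%:R * s
  | 4 => 5%:R / 8%:R
  | 5 => - (5%:R / 8%:R)
  | _ => - (15%:R / 16%:R) - 4%:R * s ^+ 2
  end.

Lemma ricci_gs_entry (j k : nat) : (j < 7)%N -> (k < 7)%N ->
  ricci_gs j k = ricci_eigen j *+ (j == k).
Proof.
case: j => [|[|[|[|[|[|[|j]]]]]]] // _; case: k => [|[|[|[|[|[|[|k]]]]]]] // _;
  rewrite /ricci_gs /curv_gs /sum7 /lc_conn_gs /=; field; by rewrite ?pnatr_eq0.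
Qed.

Lemma ricci_mx_gs : ricci_mx (g_br s) = diag_mx (\row_i ricci_eigen i).
Proof.
by apply/matrixP => j k; rewrite ricci_mx_gsE ricci_gs_entry // !mxE.
Qed.

Lemma scal_sE : scal_s s = - (75%:R + 64%:R * s ^+ 2) / 16%:R.
Proof.
rewrite /scal_s /scal_curv ricci_mx_gs mxtrace_diag.
under eq_bigr do rewrite mxE.
rewrite big_ord7 /sum7 /=; field; by rewrite ?pnatr_eq0.
Qed.

Lemma ric_norm2_sE :
  ric_norm2_s s = (1725%:R + 4224%:R * s ^+ 2 + 4096%:R * s ^+ 4) / 256%:R.
Proof.
rewrite /ric_norm2_s /ricci_norm2 ricci_mx_gs mulmx_diag mxtrace_diag.
under eq_bigr do rewrite !mxE.
rewrite (big_ord7 (fun i => ricci_eigen i * ricci_eigen i)) /sum7 /=.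
field; by rewrite ?pnatr_eq0.
Qed.

End RicciOfGs.

Lemma F_sE (R : numFieldType) (s : R) :
  F_s s = (75%:R + 64%:R * s ^+ 2) ^+ 2
          / (1725%:R + 4224%:R * s ^+ 2 + 4096%:R * s ^+ 4).
Proof.
rewrite /F_s scal_sE ric_norm2_sE.
set D := _ + _ + _; rewrite invfM invrK.
(* keeping [D^-1] opaque means no [D != 0] side condition is needed *)
move: D^-1 => iD; field; by rewrite ?pnatr_eq0.
Qed.

Lemma F_s0 (R : numFieldType) : F_s (0 : R) = 75%:R / 23%:R.
Proof. rewrite F_sE expr0n /=; field; by rewrite ?pnatr_eq0. Qed.

(* With x = s^2: 75 (1725 + 4224 x + 4096 x^2) - 23 (75 + 64 x)^2 = 96000 x + 212992 x^2. *)
Lemma F_s_le_F_s0 (R : realFieldType) (s : R) : F_s s <= F_s 0.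
Proof.
have s2_ge0 : 0 <= s ^+ 2 by rewrite sqr_ge0.
have s4E : s ^+ 4 = s ^+ 2 * s ^+ 2 by rewrite -exprD.
have D_gt0 : 0 < 1725%:R + 4224%:R * s ^+ 2 + 4096%:R * s ^+ 4 :> R.
  by rewrite s4E; nra.
by rewrite F_s0 F_sE ler_pdivrMr // s4E; nra.
Qed.

Lemma F_s_sqrt15_div8 (R : rcfType) :
  F_s (Num.sqrt (15%:R : R) / 8%:R) = 135%:R / 49%:R.
Proof.
have s2E : (Num.sqrt (15%:R : R) / 8%:R) ^+ 2 = 15%:R / 64%:R.
  by rewrite expr_div_n sqr_sqrtr ?ler0n // -natrX.
have s4E : (Num.sqrt (15%:R : R) / 8%:R) ^+ 4 = (15%:R / 64%:R) ^+ 2.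
  by rewrite -s2E -exprM.
rewrite F_sE s4E s2E; field; by rewrite ?pnatr_eq0.
Qed.

Lemma F_s5_div8 (R : numFieldType) : F_s (5%:R / 8%:R : R) = 5%:R / 2%:R.
Proof. rewrite F_sE; field; by rewrite ?pnatr_eq0. Qed.

Theorem corollary4p12 (R : rcfType) :
  (forall s : R, 0 <= s ->
     F_s s = (75%:R + 64%:R * s ^+ 2) ^+ 2
             / (1725%:R + 4224%:R * s ^+ 2 + 4096%:R * s ^+ 4))
  /\ (forall s : R, 0 <= s -> F_s s <= F_s 0)
  /\ F_s (0 : R) = 75%:R / 23%:R
  /\ 3%:R < F_s (0 : R)
  /\ F_s (Num.sqrt (15%:R : R) / 8%:R) = 135%:R / 49%:R
  /\ F_s (5%:R / 8%:R : R) = 5%:R / 2%:R.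
Proof.
split; first by move=> s _; exact: F_sE.
split; first by move=> s _; exact: F_s_le_F_s0.
split; first exact: F_s0.
split; first by rewrite F_s0; lra.
by split; [exact: F_s_sqrt15_div8 | exact: F_s5_div8].
Qed.
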